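(* Let $f$ be a real function defined on $\mathbb{T}^\kappa=\{a,\dots,b-1\}$ and $g$ a real function defined on $\mathbb{T}=\{a,\dots,b\}$. Fix $0<\alpha\le 1$ and put $\mu=1-\alpha$. Then $$\sum_{t=a}^{b-1}f(t)\,({}_a\Delta_t^{\alpha}g)(t)=f(b-1)g(b)-f(a)g(a)+\sum_{t=a}^{b-2}({}_t\Delta_{\rho(b)}^{\alpha}f)(t)\,g(t+1)$$ $$\qquad+\frac{\mu}{\Gamma(\mu+1)}\,g(a)\Bigl(\sum_{t=a}^{b-1}(t+\mu-a)^{(\mu-1)}f(t)-\sum_{t=a+1}^{b-1}(t+\mu-a-1)^{(\mu-1)}f(t)\Bigr),$$ where ${}_t\Delta_{\rho(b)}^{\alpha}f$ denotes the right fractional difference with upper endpoint $\rho(b)=b-1$.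
   Context: Let $a\in\mathbb{R}$, $b=a+k$ with $k\in\mathbb{N}$, $k\ge2$, $\mathbb{T}=\{a,a+1,\dots,b\}$, $\sigma(t)=t+1$, $\rho(t)=t-1$, $\Delta g(t)=g(t+1)-g(t)$. For real $x,y$, $x^{(y)}:=\Gamma(x+1)/\Gamma(x+1-y)$ (division at a pole yields zero). For $c\in\mathbb{T}$, $g$ defined on $\{a,\dots,c\}$ and $\nu\ge0$, define on $\{a,\dots,c\}$: left fractional sum $({}_a\Delta_t^{-\nu}g)(t):=g(t)+\frac{\nu}{\Gamma(\nu+1)}\sum_{s=a}^{t-1}(t+\nu-\sigma(s))^{(\nu-1)}g(s)$; right fractional sum with endpoint $c$: $({}_t\Delta_c^{-\nu}g)(t):=g(t)+\frac{\nu}{\Gamma(\nu+1)}\sum_{s=t+1}^{c}(s+\nu-\sigma(t))^{(\nu-1)}g(s)$. For $0<\alpha\le1$ and $\mu=1-\alpha$, the left and right fractional differences of order $\alpha$ are, for $t\in\{a,\dots,c-1\}$, $({}_a\Delta_t^{\alpha}g)(t):=\Delta\bigl({}_a\Delta^{-\mu}g\bigr)(t)$ and $({}_t\Delta_c^{\alpha}g)(t):=-\Delta\bigl({}_t\Delta_c^{-\mu}g\bigr)(t)$, where $\Delta$ acts on the function $\tau\mapsto({}_a\Delta_\tau^{-\mu}g)(\tau)$, resp. $\tau\mapsto({}_\tau\Delta_c^{-\mu}g)(\tau)$. *)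

From Stdlib Require Import Reals Arith ClassicalEpsilon.
Open Scope R_scope.

Fixpoint rsum (n : nat) (F : nat -> R) : R :=
  match n with
  | O => 0
  | S m => rsum m F + F m
  end.

Fixpoint rpoch (x : R) (n : nat) : R :=
  match n with
  | O => x
  | S m => rpoch x m * (x + INR (S m))
  end.

(* Gauss/Euler product for the reciprocal Gamma function:
   1/Gamma(x) = lim_{n->oo} x(x+1)...(x+n) / (n! n^x).
   This limit exists for every real x, and equals 0 exactly at the poles
   x = 0,-1,-2,... of Gamma. *)
Definition rgamma_seq (x : R) (n : nat) : R :=
  rpoch x (S n) / (INR (Factorial.fact (S n)) * Rpower (INR (S n)) x).

Definition rgamma (x : R) : R :=
  epsilon (inhabits 0) (fun l => Un_cv (rgamma_seq x) l).

(* Gamma function (at poles the value is irrelevant for our purposes). *)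
Definition Gamma (x : R) : R := / rgamma x.

(* Generalized falling function x^(y) = Gamma(x+1)/Gamma(x+1-y),
   with division by Gamma at a pole giving 0 (1/Gamma(pole) = 0). *)
Definition falling (x y : R) : R := Gamma (x + 1) * rgamma (x + 1 - y).

(* Points of the time scale T = {a, a+1, ..., b}: the point of index j is a + j. *)

(* Left fractional sum (_a Delta_t^{-nu} g)(t) at t = a + j:
   g(t) + nu/Gamma(nu+1) * sum_{s=a}^{t-1} (t+nu-sigma(s))^(nu-1) g(s). *)
Definition lfsum (a nu : R) (g : R -> R) (j : nat) : R :=
  let t := a + INR j in
  g t + nu / Gamma (nu + 1) *
        rsum j (fun i => let s := a + INR i in
                         falling (t + nu - (s + 1)) (nu - 1) * g s).

(* Right fractional sum with endpoint c = a + m, at t = a + j: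
   g(t) + nu/Gamma(nu+1) * sum_{s=t+1}^{c} (s+nu-sigma(t))^(nu-1) g(s). *)
Definition rfsum (a : R) (m : nat) (nu : R) (g : R -> R) (j : nat) : R :=
  let t := a + INR j in
  g t + nu / Gamma (nu + 1) *
        rsum (m - j) (fun i => let s := a + INR (j + 1 + i) in
                               falling (s + nu - (t + 1)) (nu - 1) * g s).

Definition lfdiff (a alpha : R) (g : R -> R) (j : nat) : R :=
  lfsum a (1 - alpha) g (S j) - lfsum a (1 - alpha) g j.

Definition rfdiff (a : R) (m : nat) (alpha : R) (g : R -> R) (j : nat) : R :=
  - (rfsum a m (1 - alpha) g (S j) - rfsum a m (1 - alpha) g j).

From Stdlib Require Import Reals Lra Lia.
Open Scope R_scope.

(* Writing points of the time scale as a + j and c = mu / Gamma(mu+1), both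
   fractional sums of order mu are "identity + c * convolution" with the
   same kernel  h d = (d + mu)^(mu-1):  the left sum convolves with the past
   ([conv_head]), the right sum with endpoint a + m convolves with the future
   ([conv_tail]).  The theorem is therefore an identity about arbitrary
   sequences fs, gs, an arbitrary kernel h and an arbitrary constant c:
   - classical summation by parts handles the identity part;
   - exchanging the order of summation in the triangular double sums shows
     that [conv_head] and [conv_tail] are adjoint, which turns
     sum fs * Delta(head gs) into sum -Delta(tail fs) * gs plus the boundary
     term at t = a  ([head_tail_duality]);
   - [fractional_summation_by_parts] combines the two. *)

Lemma rsum_ext (n : nat) (F G : nat -> R) :
  (forall i, (i < n)%nat -> F i = G i) -> rsum n F = rsum n G.
Proof.
  induction n as [|n IH]; intros H; simpl; [reflexivity|].
  rewrite IH by (intros; apply H; lia). rewrite H by lia. reflexivity.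
Qed.

Lemma rsum_add (n : nat) (F G : nat -> R) :
  rsum n (fun i => F i + G i) = rsum n F + rsum n G.
Proof. induction n as [|n IH]; simpl; [ring|]. rewrite IH. ring. Qed.

Lemma rsum_sub (n : nat) (F G : nat -> R) :
  rsum n (fun i => F i - G i) = rsum n F - rsum n G.
Proof. induction n as [|n IH]; simpl; [ring|]. rewrite IH. ring. Qed.

Lemma rsum_scal (n : nat) (x : R) (F : nat -> R) :
  rsum n (fun i => x * F i) = x * rsum n F.
Proof. induction n as [|n IH]; simpl; [ring|]. rewrite IH. ring. Qed.

Lemma rsumS (n : nat) (F : nat -> R) : rsum (S n) F = rsum n F + F n.
Proof. reflexivity. Qed.

Lemma rsum_first (n : nat) (F : nat -> R) :
  rsum (S n) F = F 0%nat + rsum n (fun i => F (S i)).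
Proof. induction n as [|n IH]; simpl in *; [ring|]. rewrite IH. ring. Qed.

Lemma summation_by_parts (fs gs : nat -> R) (m : nat) :
  rsum (S m) (fun j => fs j * (gs (S j) - gs j)) =
  fs m * gs (S m) - fs 0%nat * gs 0%nat
  + rsum m (fun j => (fs j - fs (S j)) * gs (S j)).
Proof. induction m as [|m IH]; simpl in *; [ring|]. rewrite IH. ring. Qed.

Lemma rsum_triangle_exchange (n : nat) (F G h : nat -> R) :
  rsum n (fun j => F j * rsum (S j) (fun i => h (j - i)%nat * G i)) =
  rsum n (fun i => G i * rsum (n - i) (fun d => h d * F (i + d)%nat)).
Proof.
  induction n as [|n IH]; [reflexivity|].
  rewrite rsumS, IH.
  (* each inner sum over d < S n - i gains its last term d = n - i *)
  transitivity (rsum (S n) (fun i => G i * rsum (n - i) (fun d => h d * F (i + d)%nat)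
                                     + F n * (h (n - i)%nat * G i))).
  - rewrite rsum_add, rsum_scal, (rsumS n (fun i => G i * _)), Nat.sub_diag.
    simpl rsum. ring.
  - apply rsum_ext. intros i Hi.
    replace (S n - i)%nat with (S (n - i)) by lia. rewrite rsumS.
    replace (i + (n - i))%nat with n by lia. ring.
Qed.

Section Convolutions.

Variable h : nat -> R.

Definition conv_head (gs : nat -> R) (j : nat) : R :=
  rsum j (fun i => h (j - S i)%nat * gs i).

Definition conv_tail (m : nat) (fs : nat -> R) (j : nat) : R :=
  rsum (m - j) (fun d => h d * fs (j + 1 + d)%nat).

Lemma conv_tail_at_end (m : nat) (fs : nat -> R) : conv_tail m fs m = 0.
Proof. unfold conv_tail. rewrite Nat.sub_diag. reflexivity. Qed.

Lemma conv_tail_eq (m : nat) (fs : nat -> R) (j : nat) :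
  conv_tail m fs j = rsum (m - j) (fun d => h d * fs (S j + d)%nat).
Proof.
  unfold conv_tail. apply rsum_ext. intros d _.
  replace (j + 1 + d)%nat with (S j + d)%nat by lia. reflexivity.
Qed.

Lemma conv_head_succ_adjoint (m : nat) (fs gs : nat -> R) :
  rsum (S m) (fun j => fs j * conv_head gs (S j)) =
  gs 0%nat * rsum (S m) (fun d => h d * fs d)
  + rsum m (fun j => gs (S j) * conv_tail m fs j).
Proof.
  unfold conv_head. rewrite rsum_triangle_exchange, rsum_first.
  f_equal. apply rsum_ext. intros j _. rewrite conv_tail_eq. reflexivity.
Qed.

Lemma conv_head_adjoint (m : nat) (fs gs : nat -> R) :
  rsum (S m) (fun j => fs j * conv_head gs j) =
  rsum (S m) (fun i => gs i * conv_tail m fs i).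
Proof.
  rewrite rsum_first, rsumS, conv_tail_at_end.
  unfold conv_head at 1; simpl rsum.
  rewrite !Rmult_0_r, Rplus_0_l, Rplus_0_r.
  transitivity (rsum m (fun i => gs i * rsum (m - i) (fun d => h d * fs (S i + d)%nat))).
  - exact (rsum_triangle_exchange m (fun j => fs (S j)) gs h).
  - apply rsum_ext. intros i _. rewrite conv_tail_eq. reflexivity.
Qed.

Lemma head_tail_duality (m : nat) (fs gs : nat -> R) :
  rsum (S m) (fun j => fs j * (conv_head gs (S j) - conv_head gs j)) =
  gs 0%nat * (rsum (S m) (fun i => h i * fs i) - rsum m (fun i => h i * fs (S i)))
  + rsum m (fun j => (conv_tail m fs j - conv_tail m fs (S j)) * gs (S j)).
Proof.
  assert (Hsplit : rsum (S m) (fun j => fs j * (conv_head gs (S j) - conv_head gs j)) =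
          rsum (S m) (fun j => fs j * conv_head gs (S j))
          - rsum (S m) (fun j => fs j * conv_head gs j)).
  { rewrite <- rsum_sub. apply rsum_ext. intros; ring. }
  assert (Htail0 : conv_tail m fs 0 = rsum m (fun i => h i * fs (S i))).
  { rewrite conv_tail_eq, Nat.sub_0_r. reflexivity. }
  rewrite Hsplit, conv_head_succ_adjoint, conv_head_adjoint.
  rewrite (rsum_first m (fun i => gs i * _)), Htail0.
  transitivity (gs 0%nat * (rsum (S m) (fun i => h i * fs i) - rsum m (fun i => h i * fs (S i)))
    + (rsum m (fun j => gs (S j) * conv_tail m fs j)
       - rsum m (fun j => gs (S j) * conv_tail m fs (S j)))); [ring|].
  f_equal. rewrite <- rsum_sub. apply rsum_ext. intros; ring.
Qed.

Theorem fractional_summation_by_parts (c : R) (m : nat) (fs gs : nat -> R) :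
  rsum (S m) (fun j => fs j * ((gs (S j) + c * conv_head gs (S j))
                               - (gs j + c * conv_head gs j))) =
    fs m * gs (S m) - fs 0%nat * gs 0%nat
    + rsum m (fun j => - ((fs (S j) + c * conv_tail m fs (S j))
                          - (fs j + c * conv_tail m fs j)) * gs (S j))
    + c * gs 0%nat * (rsum (S m) (fun i => h i * fs i) - rsum m (fun i => h i * fs (S i))).
Proof.
  transitivity (rsum (S m) (fun j => fs j * (gs (S j) - gs j))
    + c * rsum (S m) (fun j => fs j * (conv_head gs (S j) - conv_head gs j))).
  { rewrite <- rsum_scal, <- rsum_add. apply rsum_ext. intros j _. ring. }
  rewrite summation_by_parts, head_tail_duality.
  transitivity (fs m * gs (S m) - fs 0%nat * gs 0%nat
    + (rsum m (fun j => (fs j - fs (S j)) * gs (S j))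
       + c * rsum m (fun j => (conv_tail m fs j - conv_tail m fs (S j)) * gs (S j)))
    + c * gs 0%nat * (rsum (S m) (fun i => h i * fs i) - rsum m (fun i => h i * fs (S i))));
    [ring|].
  f_equal. f_equal.
  rewrite <- rsum_scal, <- rsum_add. apply rsum_ext. intros j _. ring.
Qed.

End Convolutions.

Definition frac_kernel (mu : R) (d : nat) : R := falling (INR d + mu) (mu - 1).

Lemma lfsum_conv_head (a mu : R) (g : R -> R) (j : nat) :
  lfsum a mu g j =
  g (a + INR j)
  + mu / Gamma (mu + 1) * conv_head (frac_kernel mu) (fun i => g (a + INR i)) j.
Proof.
  unfold lfsum, conv_head, frac_kernel. do 2 f_equal.
  apply rsum_ext. intros i Hi. do 2 f_equal.
  rewrite minus_INR, S_INR by lia. ring.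
Qed.

Lemma rfsum_conv_tail (a : R) (m : nat) (mu : R) (f : R -> R) (j : nat) :
  rfsum a m mu f j =
  f (a + INR j)
  + mu / Gamma (mu + 1) * conv_tail (frac_kernel mu) m (fun i => f (a + INR i)) j.
Proof.
  unfold rfsum, conv_tail, frac_kernel. do 2 f_equal.
  apply rsum_ext. intros i _. do 2 f_equal.
  rewrite !plus_INR. simpl. ring.
Qed.

(* The argument only
   uses k >= 1. *)
Theorem theorem3 (a : R) (k : nat) (alpha : R) (f g : R -> R) :
  (2 <= k)%nat -> 0 < alpha <= 1 ->
  let b := a + INR k in
  let mu := 1 - alpha in
  rsum k (fun i => f (a + INR i) * lfdiff a alpha g i) =
    f (b - 1) * g b - f a * g a
    + rsum (k - 1) (fun i => rfdiff a (k - 1) alpha f i * g (a + INR i + 1))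
    + mu / Gamma (mu + 1) * g a *
        (rsum k (fun i => falling (a + INR i + mu - a) (mu - 1) * f (a + INR i))
         - rsum (k - 1) (fun i => let t := a + INR (S i) in
                                  falling (t + mu - a - 1) (mu - 1) * f t)).
Proof.
  intros Hk _ b mu. subst b mu.
  destruct k as [|m]; [lia|]. replace (S m - 1)%nat with m by lia.
  set (fs := fun j => f (a + INR j)).
  set (gs := fun j => g (a + INR j)).
  set (c := (1 - alpha) / Gamma (1 - alpha + 1)).
  set (h := frac_kernel (1 - alpha)).
  transitivity (rsum (S m) (fun j => fs j * ((gs (S j) + c * conv_head h gs (S j))
                                            - (gs j + c * conv_head h gs j)))).
  { apply rsum_ext. intros j _. unfold lfdiff. rewrite !lfsum_conv_head. reflexivity. }
  rewrite fractional_summation_by_parts.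
  assert (Hfs0 : fs 0%nat = f a) by (unfold fs; simpl; f_equal; ring).
  assert (Hgs0 : gs 0%nat = g a) by (unfold gs; simpl; f_equal; ring).
  assert (Hlast : a + INR (S m) - 1 = a + INR m) by (rewrite S_INR; ring).
  rewrite Hfs0, Hgs0, Hlast.
  f_equal; [f_equal | do 2 f_equal].
  - apply rsum_ext. intros j _. unfold rfdiff. rewrite !rfsum_conv_tail.
    replace (a + INR j + 1) with (a + INR (S j)) by (rewrite S_INR; ring).
    reflexivity.
  - apply rsum_ext. intros i _. unfold h, frac_kernel, fs. do 2 f_equal. ring.
  - apply rsum_ext. intros i _. unfold h, frac_kernel, fs. do 2 f_equal.
    rewrite S_INR. ring.
Qed.
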